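(* $\displaystyle\int_{\alpha}^{\infty}\left[u - \cosh^{-1}(\sinh u)\right]\,du = \frac{\pi^2}{16} - \frac12\ln^2\!\left(1+\sqrt{2}\right)$, where $\alpha = \sinh^{-1}(1) = \ln(1+\sqrt{2})$.
   Context: $\sinh^{-1}x = \ln\!\left(x+\sqrt{x^2+1}\right)$ for all real $x$, and $\cosh^{-1}x := \ln\!\left(x+\sqrt{x^2-1}\right)$ for real $x \ge 1$ (the inverse of $\cosh$ restricted to $[0,\infty)$). *)

From Stdlib Require Import Reals.
From Coquelicot Require Import Coquelicot.
Open Scope R_scope.

Definition arsinh (x : R) : R := ln (x + sqrt (x ^ 2 + 1)).
Definition arcosh (x : R) : R := ln (x + sqrt (x ^ 2 - 1)).

From Stdlib Require Import Reals Lra Psatz.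
From Coquelicot Require Import Coquelicot.
Open Scope R_scope.

(* Put S k = ∫_0^{π/2} asin (k sin x) dx and L t = ln ((1 + t) / (1 - t)); differentiating
   under the integral sign gives S'(k) = L k / (2 k).  The substitution
   e^{-2u} = t (1 - t) / (1 + t) maps u ∈ [α, +∞) onto t ∈ (0, √2 - 1] and turns
   u - arcosh (sinh u) into L t, and Φ t = S t - (L t)² / 4 is an antiderivative in t of the
   transformed integrand; so the integral over [α, B] is Φ (√2 - 1) - Φ t, which tends to
   Φ (√2 - 1) as B → +∞, i.e. t → 0.  Since √2 - 1 is the fixed point of the involution
   x ↦ (1 - x) / (1 + x), S (√2 - 1) is read off the Landen-type identity
   S x + S ((1 - x) / (1 + x)) - ½ ln x · L x = π² / 8, whose left side has zero derivative
   on (0, 1) and tends to S 0 + S 1 = π² / 8 as x → 0⁺. *)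

Lemma ln_sqrt x : 0 < x -> ln (sqrt x) = ln x / 2.
Proof.
  intros Hx. rewrite <- (sqrt_sqrt x) at 2 by lra.
  rewrite ln_mult by (apply sqrt_lt_R0; lra). field.
Qed.

Lemma ln_le_sub_1 x : 0 < x -> ln x <= x - 1.
Proof. intros Hx. pose proof (exp_ineq1_le (ln x)) as H. rewrite exp_ln in H by lra. lra. Qed.

Lemma is_derive_asin y : -1 < y < 1 -> is_derive asin y (/ sqrt (1 - y²)).
Proof.
  intros Hy. apply is_derive_Reals.
  apply (derive_pt_eq_1 _ _ _ (derivable_pt_asin y Hy)).
  rewrite derive_pt_asin. unfold Rdiv. ring.
Qed.

Lemma continuous_asin y : -1 < y < 1 -> continuous asin y.
Proof.
  intros Hy. apply (ex_derive_continuous (K := R_AbsRing) (V := R_NormedModule)).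
  eexists. now apply is_derive_asin.
Qed.

Lemma asin_le a b : -1 <= a -> a <= b -> b <= 1 -> asin a <= asin b.
Proof.
  intros Ha Hab Hb.
  destruct (Rle_or_lt (asin a) (asin b)) as [Hle | Hlt]; [exact Hle |].
  pose proof (asin_bound a). pose proof (asin_bound b).
  assert (Hsin : sin (asin b) < sin (asin a)) by (apply sin_increasing_1; lra).
  rewrite !sin_asin in Hsin by lra. lra.
Qed.

Lemma locally_open_unit_interval k : -1 < k < 1 -> locally k (fun y => -1 < y < 1).
Proof. intros Hk. apply (open_and _ _ (open_gt (-1)) (open_lt 1)). simpl. lra. Qed.

Lemma filterlim_Rplus {T : Type} {F : (T -> Prop) -> Prop} {FF : Filter F}
  (f g : T -> R) (a b : R) :
  filterlim f F (locally a) -> filterlim g F (locally b) ->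
  filterlim (fun x => f x + g x) F (locally (a + b)).
Proof. intros Hf Hg. exact (filterlim_comp_2 f g Rplus Hf Hg (filterlim_plus a b)). Qed.

Lemma filterlim_Rminus {T : Type} {F : (T -> Prop) -> Prop} {FF : Filter F}
  (f g : T -> R) (a b : R) :
  filterlim f F (locally a) -> filterlim g F (locally b) ->
  filterlim (fun x => f x - g x) F (locally (a - b)).
Proof.
  intros Hf Hg.
  exact (filterlim_Rplus f (fun x => - g x) a (- b) Hf
           (filterlim_comp _ _ _ g Ropp _ _ _ Hg (filterlim_opp b))).
Qed.

Lemma filterlim_at_right_of_continuous (f : R -> R) x l :
  continuous f x -> f x = l -> filterlim f (at_right x) (locally l).
Proof. intros Hf <-. exact (filterlim_filter_le_1 _ (filter_le_within _) Hf). Qed.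

Lemma is_RInt_gen_at_point_p_infty (f F : R -> R) (a l : R) :
  (forall b, a < b -> is_RInt f a b (F b)) ->
  filterlim F (Rbar_locally p_infty) (locally l) ->
  is_RInt_gen f (at_point a) (Rbar_locally p_infty) l.
Proof.
  intros Hint Hlim.
  apply (filterlimi_lim_ext_loc (fun ab => F (snd ab))).
  - exists (fun x => x = a) (fun b => a < b); [reflexivity | now exists a |].
    intros x b -> Hb. now apply Hint.
  - exact (filterlim_comp _ _ _ snd F _ _ _ filterlim_snd Hlim).
Qed.

(** * The integral S *)

Definition S (k : R) := RInt (fun x => asin (k * sin x)) 0 (PI / 2).

Definition dS (k x : R) := sin x / sqrt (1 - (k * sin x)²).

Definition L (t : R) := ln (1 + t) - ln (1 - t).

Lemma mul_sin_bound k x : -1 < k < 1 -> -1 < k * sin x < 1.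
Proof.
  intros Hk. pose proof (SIN_bound x).
  split; destruct (Rle_dec 0 k); nra.
Qed.

Lemma dS_denominator_pos k x : -1 < k < 1 -> 0 < 1 - (k * sin x)².
Proof. intros Hk. pose proof (mul_sin_bound k x Hk). unfold Rsqr. nra. Qed.

Lemma is_derive_asin_mul_sin k x :
  -1 < k < 1 -> is_derive (fun z => asin (z * sin x)) k (dS k x).
Proof.
  intros Hk.
  assert (Hlin : is_derive (fun z : R => z * sin x) k (sin x)) by (auto_derive; [easy | ring]).
  pose proof (is_derive_comp _ _ k _ _ (is_derive_asin _ (mul_sin_bound k x Hk)) Hlin) as H.
  replace (dS k x) with (scal (sin x) (/ sqrt (1 - (k * sin x)²))); [exact H |].
  unfold dS, scal; simpl; unfold mult; simpl. unfold Rdiv. ring.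
Qed.

Lemma continuous_sin_snd (z : R * R) : continuous (fun p : R * R => sin (snd p)) z.
Proof. apply (continuous_comp snd sin); [apply continuous_snd | apply continuous_sin]. Qed.

Lemma continuity_2d_pt_dS k x : -1 < k < 1 -> continuity_2d_pt dS k x.
Proof.
  intros Hk. apply continuity_2d_pt_filterlim.
  apply (continuous_mult (K := R_AbsRing) (fun p : R * R => sin (snd p))
           (fun p => / sqrt (1 - (fst p * sin (snd p))²))).
  - apply continuous_sin_snd.
  - apply (continuous_comp (fun p : R * R => fst p * sin (snd p)) (fun y => / sqrt (1 - y²))).
    + apply (continuous_mult (K := R_AbsRing)); [apply continuous_fst | apply continuous_sin_snd].
    + apply (ex_derive_continuous (K := R_AbsRing) (V := R_NormedModule)).
      pose proof (dS_denominator_pos k x Hk). simpl.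
      unfold Rsqr in *. auto_derive.
      assert (Hsq : 0 < sqrt (1 + - (k * sin x * (k * sin x)))) by (apply sqrt_lt_R0; lra).
      repeat split; lra.
Qed.

Lemma ex_RInt_asin_mul_sin k :
  -1 < k < 1 -> ex_RInt (fun x => asin (k * sin x)) 0 (PI / 2).
Proof.
  intros Hk. apply (ex_RInt_continuous (V := R_CompleteNormedModule)). intros x _.
  apply (continuous_comp (fun x => k * sin x) asin).
  - apply (continuous_mult (K := R_AbsRing)); [apply continuous_const | apply continuous_sin].
  - now apply continuous_asin, mul_sin_bound.
Qed.

Lemma is_derive_S_RInt k : -1 < k < 1 -> is_derive S k (RInt (dS k) 0 (PI / 2)).
Proof.
  intros Hk.
  assert (HdS : forall y t, -1 < y < 1 -> Derive (fun z => asin (z * sin t)) y = dS y t)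
    by (intros; now apply is_derive_unique, is_derive_asin_mul_sin).
  rewrite <- (RInt_ext (fun t => Derive (fun z => asin (z * sin t)) k))
    by (intros; now apply HdS).
  apply (is_derive_RInt_param (fun z t => asin (z * sin t))).
  - apply (filter_imp (fun y => -1 < y < 1)); [| now apply locally_open_unit_interval].
    intros y Hy t _. eexists. now apply is_derive_asin_mul_sin.
  - intros t _. apply (continuity_2d_pt_ext_loc dS); [| now apply continuity_2d_pt_dS].
    assert (Hr : 0 < Rmin (1 - k) (1 + k)) by (apply Rmin_pos; lra).
    exists (mkposreal _ Hr). intros u v Hu _. simpl in Hu.
    symmetry. apply HdS. apply Rabs_def2 in Hu.
    pose proof (Rmin_l (1 - k) (1 + k)). pose proof (Rmin_r (1 - k) (1 + k)). lra.
  - apply (filter_imp (fun y => -1 < y < 1)); [| now apply locally_open_unit_interval].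
    exact ex_RInt_asin_mul_sin.
Qed.

Lemma continuous_dS k x : -1 < k < 1 -> continuous (dS k) x.
Proof.
  intros Hk. pose proof (dS_denominator_pos k x Hk).
  apply (ex_derive_continuous (K := R_AbsRing) (V := R_NormedModule)).
  unfold dS, Rsqr in *. auto_derive.
  assert (0 < sqrt (1 + - (k * sin x * (k * sin x)))) by (apply sqrt_lt_R0; lra).
  repeat split; lra.
Qed.

Lemma is_RInt_dS k : 0 < k < 1 -> is_RInt (dS k) 0 (PI / 2) (L k / (2 * k)).
Proof.
  intros Hk.
  set (A x := - / k * ln (k * cos x + sqrt (1 - (k * sin x)²))).
  replace (L k / (2 * k)) with (minus (A (PI / 2)) (A 0)).
  2: {
    unfold minus, plus, opp, A; simpl. rewrite cos_PI2, sin_PI2, cos_0, sin_0.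
    replace (1 - (k * 1)²) with ((1 - k) * (1 + k)) by (unfold Rsqr; ring).
    replace (1 - (k * 0)²) with 1 by (unfold Rsqr; ring).
    rewrite sqrt_1, Rmult_0_r, Rplus_0_l, Rmult_1_r, ln_sqrt, ln_mult by nra.
    rewrite (Rplus_comm k 1). unfold L. field. lra. }
  apply (is_RInt_derive (V := R_CompleteNormedModule)).
  - intros x Hx. rewrite Rmin_left, Rmax_right in Hx by (pose proof PI_RGT_0; lra).
    assert (Hcos : 0 <= cos x) by (apply cos_ge_0; pose proof PI_RGT_0; lra).
    pose proof (dS_denominator_pos k x ltac:(lra)) as Hpos. unfold Rsqr in *.
    assert (Hsq := sqrt_lt_R0 _ Hpos).
    unfold A, dS. auto_derive.
    + replace (1 + - (k * sin x * (k * sin x))) with (1 - k * sin x * (k * sin x)) by ring.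
      repeat split; nra.
    + replace (1 + - (k * sin x * (k * sin x))) with (1 - k * sin x * (k * sin x)) by ring.
      set (s := sqrt (1 - k * sin x * (k * sin x))) in *.
      unfold Rsqr. fold s. field. repeat split; nra.
  - intros y _. apply continuous_dS. lra.
Qed.

Lemma is_derive_S k : 0 < k < 1 -> is_derive S k (L k / (2 * k)).
Proof.
  intros Hk. rewrite <- (is_RInt_unique _ _ _ _ (is_RInt_dS k Hk)).
  apply is_derive_S_RInt. lra.
Qed.

Lemma S_0 : S 0 = 0.
Proof.
  unfold S. rewrite (RInt_ext _ (fun _ => 0)) by (intros; rewrite Rmult_0_l; apply asin_0).
  rewrite RInt_const. apply Rmult_0_r.
Qed.

Lemma continuous_S_0 : continuous S 0.
Proof.
  apply (ex_derive_continuous (K := R_AbsRing) (V := R_NormedModule)).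
  eexists. apply is_derive_S_RInt. lra.
Qed.

Lemma asin_mul_sin_bounds y d x :
  0 <= d <= PI / 2 -> cos d <= y <= 1 -> 0 <= x <= PI / 2 ->
  x - d <= asin (y * sin x) <= x.
Proof.
  intros Hd Hy Hx. pose proof PI_RGT_0.
  pose proof (SIN_bound x). pose proof (SIN_bound (x - d)).
  assert (Hsin : 0 <= sin x) by (apply sin_ge_0; lra).
  assert (Hcd : 0 <= cos d) by (apply cos_ge_0; lra).
  split.
  - destruct (Rle_dec x d).
    + pose proof (asin_le 0 (y * sin x) ltac:(lra) ltac:(nra) ltac:(nra)).
      rewrite asin_0 in *. lra.
    + assert (sin (x - d) <= y * sin x).
      { rewrite sin_minus.
        assert (0 <= cos x) by (apply cos_ge_0; lra).
        assert (0 <= sin d) by (apply sin_ge_0; lra). nra. }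
      rewrite <- (asin_sin (x - d)) at 1 by lra. apply asin_le; nra.
  - rewrite <- (asin_sin x) at 2 by lra. apply asin_le; nra.
Qed.

Lemma is_RInt_sub_const d : is_RInt (fun x => x - d) 0 (PI / 2) (PI ^ 2 / 8 - PI / 2 * d).
Proof.
  replace (PI ^ 2 / 8 - PI / 2 * d) with
    (minus ((fun x => x ^ 2 / 2 - d * x) (PI / 2)) ((fun x => x ^ 2 / 2 - d * x) 0))
    by (unfold minus, plus, opp; simpl; field).
  apply (is_RInt_derive (V := R_CompleteNormedModule) (fun x => x ^ 2 / 2 - d * x)).
  - intros x _. auto_derive; [easy | field].
  - intros x _. apply (ex_derive_continuous (K := R_AbsRing) (V := R_NormedModule)).
    auto_derive. easy.
Qed.

Lemma S_bounds y d :
  0 <= d <= PI / 2 -> cos d <= y < 1 -> PI ^ 2 / 8 - PI / 2 * d <= S y <= PI ^ 2 / 8.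
Proof.
  intros Hd Hy. pose proof PI_RGT_0.
  assert (Hcd : 0 <= cos d) by (apply cos_ge_0; lra).
  assert (HS : is_RInt (fun x => asin (y * sin x)) 0 (PI / 2) (S y))
    by (apply (RInt_correct (V := R_CompleteNormedModule)), ex_RInt_asin_mul_sin; lra).
  split.
  - apply (is_RInt_le _ _ 0 (PI / 2) _ _ ltac:(lra) (is_RInt_sub_const d) HS).
    intros x Hx. apply (asin_mul_sin_bounds y d x); lra.
  - replace (PI ^ 2 / 8) with (PI ^ 2 / 8 - PI / 2 * 0) by ring.
    apply (is_RInt_le _ _ 0 (PI / 2) _ _ ltac:(lra) HS (is_RInt_sub_const 0)).
    intros x Hx. pose proof (asin_mul_sin_bounds y d x). lra.
Qed.

Lemma filterlim_S_1 : filterlim S (at_left 1) (locally (PI ^ 2 / 8)).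
Proof.
  apply filterlim_locally. intros eps. pose proof PI_RGT_0.
  set (d := Rmin (eps / PI) (PI / 2)).
  assert (Hd : 0 < d <= PI / 2)
    by (split; [apply Rmin_pos; [apply Rdiv_lt_0_compat; [apply cond_pos | lra] | lra]
               | apply Rmin_r]).
  assert (Hcd : cos d < 1) by (rewrite <- cos_0; apply cos_decreasing_1; lra).
  assert (Hdeps : PI / 2 * d < eps).
  { assert (d <= eps / PI) by apply Rmin_l.
    assert (PI * (eps / PI) = eps) by (field; lra). pose proof (cond_pos eps). nra. }
  exists (mkposreal (1 - cos d) ltac:(lra)). intros y Hy Hy1.
  change (Rabs (y - 1) < 1 - cos d) in Hy. apply Rabs_def2 in Hy.
  destruct (S_bounds y d ltac:(lra) ltac:(lra)).
  change (Rabs (S y - PI ^ 2 / 8) < eps). apply Rabs_def1; lra.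
Qed.

(** * A Landen-type identity for S *)

Definition landen (x : R) := S x + S ((1 - x) / (1 + x)) - / 2 * ln x * L x.

Lemma landen_dual_bounds x : 0 < x < 1 -> 0 < (1 - x) / (1 + x) < 1.
Proof.
  intros Hx. split; [apply Rdiv_lt_0_compat; lra |].
  apply Rmult_lt_reg_r with (1 + x); [lra |].
  unfold Rdiv. rewrite Rmult_assoc, Rinv_l by lra. lra.
Qed.

Lemma L_landen_dual x : 0 < x < 1 -> L ((1 - x) / (1 + x)) = - ln x.
Proof.
  intros Hx. unfold L.
  replace (1 + (1 - x) / (1 + x)) with (2 / (1 + x)) by (field; lra).
  replace (1 - (1 - x) / (1 + x)) with (x * (2 / (1 + x))) by (field; lra).
  rewrite ln_mult by (try apply Rdiv_lt_0_compat; lra). ring.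
Qed.

Lemma is_derive_landen x : 0 < x < 1 -> is_derive landen x 0.
Proof.
  intros Hx.
  pose (x' := (1 - x) / (1 + x)).
  assert (Hx' : 0 < x' < 1) by now apply landen_dual_bounds.
  assert (HL' : L x' = - ln x) by now apply L_landen_dual.
  assert (Hdual : is_derive (fun y => (1 - y) / (1 + y)) x (-2 / (1 + x) ^ 2))
    by (auto_derive; [lra | field; lra]).
  assert (Hlog : is_derive (fun y => / 2 * ln y * L y) x
                   (/ 2 * / x * L x + / 2 * ln x * (/ (1 + x) + / (1 - x))))
    by (unfold L; auto_derive; [repeat split; lra | unfold Rminus; field; lra]).
  pose proof (is_derive_comp S (fun y => (1 - y) / (1 + y)) x _ _ (is_derive_S x' Hx') Hdual)
    as HSdual.
  pose proof (is_derive_minus _ _ x _ _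
                (is_derive_plus _ _ x _ _ (is_derive_S x Hx) HSdual) Hlog) as H.
  unfold landen.
  replace 0 with (minus (plus (L x / (2 * x)) (scal (-2 / (1 + x) ^ 2) (L x' / (2 * x'))))
                        (/ 2 * / x * L x + / 2 * ln x * (/ (1 + x) + / (1 - x))));
    [exact H |].
  unfold minus, plus, opp, scal; simpl; unfold mult; simpl.
  rewrite HL'. unfold x'. field. lra.
Qed.

Lemma landen_const x y : 0 < x < 1 -> 0 < y < 1 -> landen x = landen y.
Proof.
  intros Hx Hy.
  assert (Hin : forall t, Rmin x y <= t <= Rmax x y -> 0 < t < 1).
  { intros t Ht. pose proof (Rmin_glb_lt x y 0). pose proof (Rmax_lub_lt x y 1).
    lra. }
  destruct (MVT_gen landen x y (fun _ => 0)) as [z [_ Hz]].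
  - intros t Ht. apply is_derive_landen, Hin. lra.
  - intros t Ht. apply continuity_pt_filterlim.
    apply (ex_derive_continuous (K := R_AbsRing) (V := R_NormedModule)).
    eexists. now apply is_derive_landen, Hin.
  - lra.
Qed.

Lemma L_bounds x : 0 <= x <= / 2 -> 0 <= L x <= 3 * x.
Proof.
  intros Hx. unfold L.
  assert (ln (1 - x) <= ln (1 + x)) by (apply ln_le; lra).
  pose proof (ln_le_sub_1 (1 + x)).
  assert (- ln (1 - x) <= x / (1 - x)).
  { rewrite <- ln_Rinv by lra.
    replace (x / (1 - x)) with (/ (1 - x) - 1) by (field; lra).
    apply ln_le_sub_1, Rinv_0_lt_compat. lra. }
  assert (x / (1 - x) <= 2 * x).
  { apply Rmult_le_reg_r with (1 - x); [lra |].
    unfold Rdiv. rewrite Rmult_assoc, Rinv_l by lra. nra. }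
  lra.
Qed.

(* With [s = sqrt x]: [-ln s <= 1/s - 1 < 1/s] and [L x <= 3 s^2]. *)

Lemma log_term_bound x : 0 < x <= / 2 -> Rabs (/ 2 * ln x * L x) <= 3 * sqrt x.
Proof.
  intros Hx.
  assert (Hs : 0 < sqrt x) by (apply sqrt_lt_R0; lra).
  assert (Hss : sqrt x * sqrt x = x) by (apply sqrt_sqrt; lra).
  assert (Hln : / 2 * ln x = ln (sqrt x)) by (rewrite ln_sqrt by lra; field).
  assert (Hlns : - ln (sqrt x) <= / sqrt x).
  { rewrite <- ln_Rinv by lra.
    pose proof (ln_le_sub_1 (/ sqrt x) (Rinv_0_lt_compat _ Hs)). lra. }
  assert (Hlnneg : ln (sqrt x) < 0)
    by (rewrite <- ln_1; apply ln_increasing; [lra | rewrite <- sqrt_1; apply sqrt_lt_1; lra]).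
  destruct (L_bounds x ltac:(lra)).
  rewrite Hln, Rabs_left1 by nra.
  apply Rle_trans with (/ sqrt x * (3 * x)).
  - rewrite Ropp_mult_distr_l. apply Rmult_le_compat; lra.
  - right. rewrite <- Hss at 2. field. lra.
Qed.

Lemma filterlim_log_term :
  filterlim (fun x => / 2 * ln x * L x) (at_right 0) (locally 0).
Proof.
  assert (Hsqrt : forall c, continuous (fun x => c * sqrt x) 0).
  { intros c. apply (continuous_mult (K := R_AbsRing));
      [apply continuous_const | apply continuous_sqrt]. }
  change (filterlim (fun x => / 2 * ln x * L x) (at_right 0) (Rbar_locally 0)).
  apply (filterlim_le_le (fun x => - 3 * sqrt x) _ (fun x => 3 * sqrt x)).
  - exists (mkposreal (/ 2) ltac:(lra)). intros x Hx Hx0.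
    change (Rabs (x - 0) < / 2) in Hx. apply Rabs_def2 in Hx.
    pose proof (log_term_bound x ltac:(lra)) as Hb.
    apply Rabs_le_between in Hb. lra.
  - apply filterlim_at_right_of_continuous; [apply Hsqrt | rewrite sqrt_0; ring].
  - apply filterlim_at_right_of_continuous; [apply Hsqrt | rewrite sqrt_0; ring].
Qed.

Lemma filterlim_landen_dual_0 :
  filterlim (fun x => (1 - x) / (1 + x)) (at_right 0) (at_left 1).
Proof.
  intros P [eps HP].
  assert (Heps : 0 < Rmin (eps / 2) 1) by (apply Rmin_pos; [pose proof (cond_pos eps) |]; lra).
  exists (mkposreal _ Heps). intros x Hx Hx0. simpl in Hx0.
  change (Rabs (x - 0) < Rmin (eps / 2) 1) in Hx. apply Rabs_def2 in Hx.
  pose proof (Rmin_l (eps / 2) 1). pose proof (Rmin_r (eps / 2) 1).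
  assert (Hd : 1 - (1 - x) / (1 + x) = 2 * x / (1 + x)) by (field; lra).
  assert (Hpos : 0 < 2 * x / (1 + x) <= 2 * x).
  { split; [apply Rdiv_lt_0_compat; lra |].
    apply Rmult_le_reg_r with (1 + x); [lra |].
    unfold Rdiv. rewrite Rmult_assoc, Rinv_l by lra. nra. }
  apply HP; [| lra].
  change (Rabs ((1 - x) / (1 + x) - 1) < eps). apply Rabs_def1; lra.
Qed.

Lemma filterlim_landen_0 : filterlim landen (at_right 0) (locally (PI ^ 2 / 8)).
Proof.
  replace (PI ^ 2 / 8) with (0 + PI ^ 2 / 8 - 0) by ring.
  apply filterlim_Rminus; [apply filterlim_Rplus | exact filterlim_log_term].
  - apply filterlim_at_right_of_continuous; [exact continuous_S_0 | exact S_0].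
  - exact (filterlim_comp _ _ _ _ S _ _ _ filterlim_landen_dual_0 filterlim_S_1).
Qed.

Lemma landen_value x : 0 < x < 1 -> landen x = PI ^ 2 / 8.
Proof.
  intros Hx.
  apply (filterlim_locally_unique (F := at_right 0) landen); [| exact filterlim_landen_0].
  apply (filterlim_ext_loc (fun _ => landen x)); [| apply filterlim_const].
  exists (mkposreal 1 Rlt_0_1). intros y Hy Hy0.
  change (Rabs (y - 0) < 1) in Hy. apply Rabs_def2 in Hy.
  apply landen_const; lra.
Qed.

(** * The substitution *)

Definition tfix := sqrt 2 - 1.

Lemma tfix_bounds : 0 < tfix < / 2 /\ tfix * tfix + 2 * tfix = 1.
Proof.
  unfold tfix. pose proof (sqrt_sqrt 2 ltac:(lra)).
  assert (1 < sqrt 2) by (rewrite <- sqrt_1; apply sqrt_lt_1; lra).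
  repeat split; nra.
Qed.

Lemma landen_dual_tfix : (1 - tfix) / (1 + tfix) = tfix.
Proof. destruct tfix_bounds as [? Hq]. field_simplify_eq; nra. Qed.

Lemma ln_tfix : ln tfix = - ln (1 + sqrt 2).
Proof.
  destruct tfix_bounds as [? _]. rewrite <- ln_Rinv by (unfold tfix in *; lra).
  f_equal. unfold tfix. pose proof (sqrt_sqrt 2 ltac:(lra)).
  field_simplify_eq; [| unfold tfix in *; lra]. nra.
Qed.

Definition integrand (u : R) := u - arcosh (sinh u).

Definition U (t : R) := - / 2 * ln (t * (1 - t) / (1 + t)).

Definition dU (t : R) := - / 2 * (/ t - / (1 - t) - / (1 + t)).

Definition Phi (t : R) := S t - L t ^ 2 / 4.

Lemma U_tfix : U tfix = ln (1 + sqrt 2).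
Proof.
  destruct tfix_bounds as [? _]. unfold U.
  replace (tfix * (1 - tfix) / (1 + tfix)) with (tfix * tfix)
    by (rewrite <- landen_dual_tfix at 2; field; lra).
  rewrite ln_mult, ln_tfix by lra. field.
Qed.

Lemma integrand_U t : 0 < t <= tfix -> integrand (U t) = L t.
Proof.
  intros Ht. destruct tfix_bounds as [Htfix Hq].
  set (p := t * (1 - t) / (1 + t)).
  assert (Hp : 0 < p) by (unfold p; apply Rdiv_lt_0_compat; nra).
  set (q := sqrt p).
  assert (Hq0 : 0 < q) by (apply sqrt_lt_R0; lra).
  assert (Hqq : q * q = p) by (apply sqrt_sqrt; lra).
  assert (HU : U t = - ln q) by (unfold U, q; fold p; rewrite ln_sqrt by lra; field).
  assert (Hsinh : sinh (U t) = (/ q - q) / 2)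
    by (rewrite HU; unfold sinh; rewrite Ropp_involutive, exp_Ropp, exp_ln by lra; reflexivity).
  assert (Hw : 0 <= 1 - 2 * t - t * t) by nra.
  set (w := (1 - 2 * t - t * t) / (2 * (1 + t) * q)).
  assert (Hww : w * w = ((/ q - q) / 2) ^ 2 - 1).
  { replace (((/ q - q) / 2) ^ 2 - 1) with (((1 - q * q) ^ 2 - 4 * (q * q)) / (4 * (q * q)))
      by (field; lra).
    replace (w * w) with ((1 - 2 * t - t * t) ^ 2 / (4 * (1 + t) ^ 2 * (q * q)))
      by (unfold w; field; lra).
    rewrite Hqq. unfold p. field. repeat split; lra. }
  assert (Hsq : sqrt (((/ q - q) / 2) ^ 2 - 1) = w).
  { apply sqrt_lem_1; [rewrite <- Hww; apply Rle_0_sqr | | exact Hww].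
    unfold w. apply Rdiv_le_0_compat; nra. }
  assert (Hsum : (/ q - q) / 2 + w = (1 - t) / ((1 + t) * q)).
  { replace ((/ q - q) / 2) with ((1 - q * q) / (2 * q)) by (field; lra).
    rewrite Hqq. unfold w, p. field. repeat split; lra. }
  unfold integrand, arcosh. rewrite Hsinh, Hsq, Hsum, HU.
  unfold Rdiv.
  rewrite ln_mult, ln_Rinv, ln_mult
    by (try apply Rinv_0_lt_compat; try apply Rmult_lt_0_compat; lra).
  unfold L. ring.
Qed.

Lemma is_derive_U t : 0 < t < 1 -> is_derive U t (dU t).
Proof.
  intros Ht. unfold U, dU. auto_derive.
  - split; [lra |]. split; [| easy]. apply Rdiv_lt_0_compat; nra.
  - field. repeat split; lra.
Qed.

Lemma continuous_dU t : 0 < t < 1 -> continuous dU t.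
Proof.
  intros Ht. apply (ex_derive_continuous (K := R_AbsRing) (V := R_NormedModule)).
  unfold dU. auto_derive. repeat split; lra.
Qed.

Lemma is_derive_Phi t : 0 < t < 1 -> is_derive Phi t (- (dU t * L t)).
Proof.
  intros Ht.
  assert (HL2 : is_derive (fun y => L y ^ 2 / 4) t (L t / 2 * (/ (1 + t) + / (1 - t))))
    by (unfold L; auto_derive; [repeat split; lra | unfold Rminus; field; lra]).
  replace (- (dU t * L t)) with (L t / (2 * t) - L t / 2 * (/ (1 + t) + / (1 - t)))
    by (unfold dU; field; lra).
  exact (is_derive_minus _ _ t _ _ (is_derive_S t Ht) HL2).
Qed.

Lemma continuous_dU_L t : 0 < t < 1 -> continuous (fun y => dU y * L y) t.
Proof.
  intros Ht. apply (ex_derive_continuous (K := R_AbsRing) (V := R_NormedModule)).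
  unfold dU, L. auto_derive. repeat split; lra.
Qed.

Lemma U_pos t : 0 < t < 1 -> 0 < U t.
Proof.
  intros Ht. unfold U.
  assert (ln (t * (1 - t) / (1 + t)) < 0); [| lra].
  rewrite <- ln_1. apply ln_increasing; [apply Rdiv_lt_0_compat; nra |].
  apply Rmult_lt_reg_r with (1 + t); [lra |].
  unfold Rdiv. rewrite Rmult_assoc, Rinv_l by lra. nra.
Qed.

Lemma continuous_integrand u : 0 < u -> continuous integrand u.
Proof.
  intros Hu.
  assert (Hsinh : forall v, continuous sinh v).
  { intros v. apply (ex_derive_continuous (K := R_AbsRing) (V := R_NormedModule)).
    unfold sinh. auto_derive. easy. }
  assert (Hsinh_pos : 0 < sinh u).
  { unfold sinh. assert (exp (- u) < exp u) by (apply exp_increasing; lra). lra. }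
  unfold integrand, arcosh.
  apply (continuous_minus (V := R_NormedModule)); [apply continuous_id |].
  apply (continuous_comp (fun v => sinh v + sqrt (sinh v ^ 2 - 1)) ln).
  - apply (continuous_plus (V := R_NormedModule)); [apply Hsinh |].
    apply continuous_sqrt_comp.
    apply (continuous_minus (V := R_NormedModule)); [| apply continuous_const].
    apply (continuous_comp sinh (fun s => s ^ 2)); [apply Hsinh |].
    apply (ex_derive_continuous (K := R_AbsRing) (V := R_NormedModule)). auto_derive. easy.
  - apply continuous_ln. pose proof (sqrt_pos (sinh u ^ 2 - 1)). lra.
Qed.

Lemma is_RInt_integrand_U t :
  0 < t < tfix -> is_RInt integrand (U tfix) (U t) (Phi tfix - Phi t).
Proof.
  intros Ht. destruct tfix_bounds as [Htfix _].
  assert (Hin : forall y, Rmin tfix t <= y <= Rmax tfix t -> 0 < y <= tfix)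
    by (rewrite Rmin_right, Rmax_left by lra; intros; lra).
  assert (Hsubst : is_RInt (fun y => dU y * L y) tfix t (RInt integrand (U tfix) (U t))).
  { apply (is_RInt_ext (fun y => scal (dU y) (integrand (U y)))).
    - intros y Hy. rewrite integrand_U by (apply Hin; lra). reflexivity.
    - apply (is_RInt_comp integrand U dU).
      + intros y Hy. apply continuous_integrand, U_pos. pose proof (Hin y Hy). lra.
      + intros y Hy. pose proof (Hin y Hy).
        split; [apply is_derive_U | apply continuous_dU]; lra. }
  assert (Hftc : is_RInt (fun y => dU y * L y) tfix t (Phi tfix - Phi t)).
  { replace (Phi tfix - Phi t) with (minus (- Phi t) (- Phi tfix))
      by (unfold minus, plus, opp; simpl; ring).
    apply (is_RInt_derive (fun y => - Phi y)).
    - intros y Hy. pose proof (Hin y Hy).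
      replace (dU y * L y) with (opp (- (dU y * L y))) by (unfold opp; simpl; ring).
      apply (is_derive_opp Phi), is_derive_Phi. lra.
    - intros y Hy. pose proof (Hin y Hy). apply continuous_dU_L. lra. }
  assert (Hex : ex_RInt integrand (U tfix) (U t)).
  { apply (ex_RInt_continuous (V := R_CompleteNormedModule)). intros z Hz.
    apply continuous_integrand.
    pose proof (U_pos t ltac:(lra)). pose proof (U_pos tfix ltac:(lra)).
    pose proof (Rmin_glb_lt (U tfix) (U t) 0). lra. }
  rewrite <- (is_RInt_unique _ _ _ _ Hftc), (is_RInt_unique _ _ _ _ Hsubst).
  exact (RInt_correct _ _ _ Hex).
Qed.

Lemma Phi_tfix : Phi tfix = PI ^ 2 / 16 - / 2 * ln (1 + sqrt 2) ^ 2.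
Proof.
  destruct tfix_bounds as [Htfix _].
  pose proof (landen_value tfix ltac:(lra)) as Hlanden.
  assert (HL : L tfix = ln (1 + sqrt 2))
    by (rewrite <- landen_dual_tfix at 1; rewrite L_landen_dual, ln_tfix by lra; ring).
  unfold landen in Hlanden. rewrite landen_dual_tfix, HL, ln_tfix in Hlanden.
  unfold Phi. rewrite HL. nra.
Qed.

Lemma continuous_Phi_0 : continuous Phi 0.
Proof.
  apply (ex_derive_continuous (K := R_AbsRing) (V := R_NormedModule)).
  apply (ex_derive_minus (V := R_NormedModule)).
  - eexists. apply is_derive_S_RInt. lra.
  - unfold L. auto_derive. repeat split; lra.
Qed.

Lemma Phi_0 : Phi 0 = 0.
Proof. unfold Phi, L. rewrite S_0, Rplus_0_r, Rminus_0_r, ln_1. field. Qed.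

Definition small_root (e : R) := ((1 - e) - sqrt ((1 - e) ^ 2 - 4 * e)) / 2.

Lemma small_root_spec e :
  0 < e < tfix * tfix ->
  0 < small_root e < tfix /\ small_root e * (1 - small_root e) / (1 + small_root e) = e.
Proof.
  intros He. destruct tfix_bounds as [Htfix Hq].
  assert (HD : 0 < (1 - e) ^ 2 - 4 * e) by nra.
  set (s := sqrt ((1 - e) ^ 2 - 4 * e)).
  assert (Hs : 0 < s) by (apply sqrt_lt_R0; lra).
  assert (Hss : s * s = (1 - e) ^ 2 - 4 * e) by (apply sqrt_sqrt; lra).
  assert (Hs1 : s < 1 - e) by nra.
  set (t := small_root e).
  assert (Hroot : t * t + (e - 1) * t + e = 0) by (unfold t, small_root; fold s; nra).
  assert (Ht0 : 0 < t) by (unfold t, small_root; fold s; lra).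
  assert (Htc : t < tfix).
  { assert (t * ((1 - e + s) / 2) = e) by (unfold t, small_root; fold s; nra).
    assert (t <= (1 - e + s) / 2) by (unfold t, small_root; fold s; lra). nra. }
  split; [lra |].
  apply Rmult_eq_reg_r with (1 + t); [| lra].
  unfold Rdiv. rewrite Rmult_assoc, Rinv_l by lra. nra.
Qed.

Lemma continuous_small_root : continuous small_root 0.
Proof.
  apply (ex_derive_continuous (K := R_AbsRing) (V := R_NormedModule)).
  unfold small_root. auto_derive. lra.
Qed.

Lemma small_root_0 : small_root 0 = 0.
Proof.
  unfold small_root. replace ((1 - 0) ^ 2 - 4 * 0) with 1 by ring.
  rewrite sqrt_1. field.
Qed.

Definition U_inv (B : R) := small_root (exp (-2 * B)).

Lemma U_U_inv B : U tfix < B -> 0 < U_inv B < tfix /\ U (U_inv B) = B.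
Proof.
  intros HB. destruct tfix_bounds as [Htfix _].
  assert (He : exp (-2 * B) < tfix * tfix).
  { rewrite <- (exp_ln tfix) by lra. rewrite <- exp_plus.
    apply exp_increasing. rewrite U_tfix in HB. rewrite ln_tfix. lra. }
  destruct (small_root_spec (exp (-2 * B)) (conj (exp_pos _) He)) as [Hbounds Heq].
  split; [exact Hbounds |].
  unfold U, U_inv. rewrite Heq, ln_exp. field.
Qed.

Lemma filterlim_U_inv : filterlim U_inv (Rbar_locally p_infty) (locally 0).
Proof.
  apply (filterlim_comp _ _ _ (fun B => exp (-2 * B)) small_root _ (locally 0)).
  - apply (filterlim_comp _ _ _ (fun B => -2 * B) exp _ (Rbar_locally m_infty));
      [| exact is_lim_exp_m].
    pose proof (is_lim_scal_l (fun B => B) (-2) p_infty p_infty (is_lim_id p_infty)) as H.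
    unfold Rbar_mult, Rbar_mult' in H. destruct (Rle_dec 0 (-2)); [lra |]. exact H.
  - rewrite <- small_root_0 at 2. exact continuous_small_root.
Qed.

Lemma filterlim_Phi_U_inv : filterlim (fun B => Phi (U_inv B)) (Rbar_locally p_infty) (locally 0).
Proof.
  apply (filterlim_comp _ _ _ U_inv Phi _ (locally 0) _ filterlim_U_inv).
  rewrite <- Phi_0 at 2. exact continuous_Phi_0.
Qed.

Theorem theorem2 :
  is_RInt_gen (fun u : R => u - arcosh (sinh u))
    (at_point (arsinh 1)) (Rbar_locally p_infty)
    (PI ^ 2 / 16 - / 2 * (ln (1 + sqrt 2)) ^ 2).
Proof.
  assert (Ha : arsinh 1 = U tfix)
    by (rewrite U_tfix; unfold arsinh; do 3 f_equal; ring).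
  rewrite Ha, <- Phi_tfix.
  apply (is_RInt_gen_at_point_p_infty integrand (fun B => Phi tfix - Phi (U_inv B))).
  - intros B HB. destruct (U_U_inv B HB) as [Hbounds HU].
    rewrite <- HU at 1. now apply is_RInt_integrand_U.
  - pose proof (filterlim_Rminus _ _ _ _ (filterlim_const (Phi tfix)) filterlim_Phi_U_inv) as H.
    rewrite Rminus_0_r in H. exact H.
Qed.
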